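(* Let $n\ge2$, $\omega\in\mathbb{R}^n$, $k\in\mathbb{R}_{>0}^n$ satisfy (IC1) $\sum_\mu\omega_\mu=0$, (IC2) $\omega\ne0$, (IC3) $\left|\frac{\omega_1}{k_1}\right|\le\cdots\le\left|\frac{\omega_n}{k_n}\right|$. Define $$g(R)=\prod_{\sigma\in\{-1,+1\}^n}\left(-R+\frac1n\sum_{\mu=1}^n\sigma_\mu\sqrt{k_\mu^2R-\omega_\mu^2}\right).$$ Then $g$ is a polynomial in $R$ of degree $2^n$, and there exists a polynomial $h(R)$ of degree $2^n-2$ with $g(R)=R^2\,h(R)$.
   Context: Here $R$ may be complex; for each $\mu$ any fixed choice of square root of $k_\mu^2R-\omega_\mu^2$ may be used, since the product runs over all sign choices and is therefore independent of the choice of branches. *)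

From HB Require Import structures.
From mathcomp Require Import all_boot all_order all_algebra.
From mathcomp Require Import complex.
Set Implicit Arguments. Unset Strict Implicit. Unset Printing Implicit Defensive.
Import Order.TTheory GRing.Theory Num.Theory.
Local Open Scope ring_scope.

(* g(R) = prod_{sigma in {-1,+1}^n} ( -R + 1/n sum_mu sigma_mu s_mu ),
   where s_mu is a chosen square root of k_mu^2 R - w_mu^2.
   sigma is encoded as a boolean function: sigma_mu = (-1)^(sg mu). *)
Definition gprod (F : rcfType) (n : nat) (s : 'I_n -> F[i]) (x : F[i]) : F[i] :=
  \prod_(sg : {ffun 'I_n -> bool})
     (- x + (n%:R)^-1 * \sum_(mu < n) (-1) ^+ (sg mu) * s mu).

From HB Require Import structures.
From mathcomp Require Import all_boot all_order all_algebra.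
From mathcomp Require Import complex qfpoly ring zify.
Set Implicit Arguments. Unset Strict Implicit. Unset Printing Implicit Defensive.
Import Order.TTheory GRing.Theory Num.Theory.
Local Open Scope ring_scope.

(* Square roots are eliminated one at a time: if P(Y + s) = E(Y) + s O(Y),
   then P(Y + s) P(Y - s) = E(Y)^2 - s^2 O(Y)^2 only involves s^2, a polynomial
   in R.  This yields a polynomial in R and Y, evaluated at Y = -R.  Giving R
   weight 2 and Y weight 1, each elimination squares the top weight term, so
   the top weight part is Y^(2^n) and g has degree 2^n with leading
   coefficient 1.
   For the factor R^2, evaluate at R = eps^2 with eps^4 = 0, taking
   s_mu = i w_mu + O(eps^2) when w_mu <> 0 and s_mu = k_mu eps otherwise.
   For the sign vectors that are constant on the support of w the constant
   terms add up to +-i sum w = 0, so the corresponding factors are multiples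
   of eps; there are at least four of them, or two multiples of eps^2 when w
   has full support.  Hence g(eps^2) = g_0 + g_1 eps^2 vanishes. *)

Section SignedNorm.
Variable R : comNzRingType.

Definition signed_norm n (s : 'I_n -> R) (y : R) : R :=
  \prod_(sg : {ffun 'I_n -> bool}) (y + \sum_(mu < n) (-1) ^+ sg mu * s mu).

Lemma signed_norm0 (s : 'I_0 -> R) y : signed_norm s y = y.
Proof.
rewrite /signed_norm; under eq_bigr do rewrite big_ord0 addr0.
by rewrite prodr_const card_ffun !card_ord expr1.
Qed.

Lemma signed_normS n (s : 'I_n.+1 -> R) y :
  signed_norm s y = signed_norm (s \o lift ord0) (y + s ord0) *
                    signed_norm (s \o lift ord0) (y - s ord0).
Proof.
pose cons_sg (p : bool * {ffun 'I_n -> bool}) : {ffun 'I_n.+1 -> bool} :=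
  [ffun i => if unlift ord0 i is Some j then p.2 j else p.1].
pose uncons_sg (sg : {ffun 'I_n.+1 -> bool}) := (sg ord0, [ffun j => sg (lift ord0 j)]).
have cons_sgK : cancel cons_sg uncons_sg.
  case=> b sg; rewrite /uncons_sg ffunE unlift_none; congr pair.
  by apply/ffunP=> j; rewrite !ffunE liftK.
have uncons_sgK : cancel uncons_sg cons_sg.
  by move=> sg; apply/ffunP=> i; rewrite !ffunE; case: unliftP => [j ->|->]; rewrite ?ffunE.
rewrite /signed_norm (reindex cons_sg) /=; last by apply: onW_bij; exists uncons_sg.
rewrite -(pair_big xpredT xpredT
  (fun b sg => y + \sum_(mu < n.+1) (-1) ^+ cons_sg (b, sg) mu * s mu)).
rewrite big_bool mulrC /=; congr (_ * _); apply: eq_bigr => sg _;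
  rewrite big_ord_recl !ffunE unlift_none addrA /= ?expr0 ?expr1 ?mul1r ?mulN1r;
  by congr (_ + _); apply: eq_bigr => mu _; rewrite ffunE liftK.
Qed.

Lemma sum_sign_const_support n (sg : {ffun 'I_n -> bool}) b (a : 'I_n -> R) :
  (forall mu, a mu != 0 -> sg mu = b) -> \sum_(mu < n) a mu = 0 ->
  \sum_(mu < n) (-1) ^+ sg mu * a mu = 0.
Proof.
move=> sg_const a_sum0; transitivity ((-1) ^+ b * \sum_(mu < n) a mu); last first.
  by rewrite a_sum0 mulr0.
rewrite mulr_sumr; apply: eq_bigr => mu _.
by have [->|/sg_const ->] := eqVneq (a mu) 0; rewrite ?mulr0.
Qed.

Lemma prodr_eq0_nilpotent (I J : finType) (f : J -> I) (F : I -> R) (G : J -> R) d m :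
  injective f -> d ^+ (m * #|J|) = 0 -> (forall j, F (f j) = d ^+ m * G j) ->
  \prod_i F i = 0.
Proof.
move=> f_inj dN0 FfE; rewrite (bigID (mem (f @: setT))) /= big_imset; last first.
  by move=> ? ? _ _; apply: f_inj.
under eq_bigr do rewrite FfE.
by rewrite big_split /= prodr_const -exprM cardsT dN0 !mul0r.
Qed.

Lemma signed_norm_nilpotent n (d y : R) (a b c : 'I_n -> R) :
  d ^+ 4 = 0 -> \sum_(mu < n) a mu = 0 -> (exists nu, a nu != 0) ->
  (forall mu, a mu != 0 -> b mu = 0) ->
  signed_norm (fun mu => a mu + b mu * d + c mu * d ^+ 2) (y * d ^+ 2) = 0.
Proof.
move=> d4 a_sum0 [nu a_nu] a_b.
have split_sum sg : \sum_(mu < n) (-1) ^+ sg mu * (a mu + b mu * d + c mu * d ^+ 2) =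
    \sum_(mu < n) (-1) ^+ sg mu * a mu + (\sum_(mu < n) (-1) ^+ sg mu * b mu) * d +
    (\sum_(mu < n) (-1) ^+ sg mu * c mu) * d ^+ 2.
  by rewrite !mulr_suml -!big_split; apply: eq_bigr => mu _ /=; ring.
rewrite /signed_norm; case: (pickP (fun mu => a mu == 0)) => [mu0 /eqP a_mu0|a_full].
- pose f (p : bool * bool) : {ffun 'I_n -> bool} := [ffun mu => if a mu == 0 then p.1 else p.2].
  apply: (@prodr_eq0_nilpotent _ _ f _ (fun p => y * d + \sum_(mu < n) (-1) ^+ f p mu * b mu +
    (\sum_(mu < n) (-1) ^+ f p mu * c mu) * d) d 1).
  + move=> [b1 b2] [b1' b2'] /ffunP eq_f.
    by move: (eq_f mu0) (eq_f nu); rewrite !ffunE a_mu0 eqxx (negbTE a_nu) /= => -> ->.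
  + by rewrite card_prod card_bool d4.
  move=> p; rewrite split_sum (sum_sign_const_support (b := p.2)) //; last first.
    by move=> mu /negbTE a_mu; rewrite ffunE a_mu.
  by rewrite expr1; ring.
- pose f (b0 : bool) : {ffun 'I_n -> bool} := [ffun => b0].
  apply: (@prodr_eq0_nilpotent _ _ f _
    (fun b0 => y + \sum_(mu < n) (-1) ^+ f b0 mu * c mu) d 2).
  + by move=> b1 b2 /ffunP /(_ nu); rewrite !ffunE.
  + by rewrite card_bool d4.
  move=> b0; rewrite split_sum (sum_sign_const_support (b := b0)) //; last first.
    by move=> mu _; rewrite ffunE.
  rewrite big1 => [|mu _]; first by ring.
  by rewrite a_b ?mulr0 // a_full.
Qed.
End SignedNorm.

Section Elimination.
Variable A : comNzRingType.
Local Notation C := {poly {poly A}}.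

Definition shift_split_step (t c : {poly A}) (EO : C * C) : C * C :=
  (EO.1 * 'X + t%:P * EO.2 + c%:P, EO.1 + EO.2 * 'X).

Definition shift_split (t : {poly A}) (l : seq {poly A}) : C * C :=
  foldr (shift_split_step t) (0, 0) l.

Definition norm_step (t : {poly A}) (P : C) : C :=
  (shift_split t P).1 ^+ 2 - t%:P * (shift_split t P).2 ^+ 2.

Fixpoint elim_poly n : ('I_n -> {poly A}) -> C :=
  if n is n'.+1 then fun t => norm_step (t ord0) (elim_poly (t \o lift ord0))
  else fun=> 'X.

Lemma shift_splitP (B : comNzRingType) (e : {rmorphism {poly A} -> B}) t (s y : B) l :
  s ^+ 2 = e t ->
  (map_poly e (shift_split t l).1).[y] + s * (map_poly e (shift_split t l).2).[y] =
  (map_poly e (Poly l)).[y + s].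
Proof.
move=> sqr_s; elim: l => [|c l IHl] /=; first by rewrite !rmorph0 !horner0 mulr0 addr0.
rewrite cons_poly_def !(rmorphD, rmorphM) /= !map_polyX !map_polyC /=.
by rewrite !(hornerD, hornerM, hornerX, hornerC) -IHl -sqr_s; ring.
Qed.

Lemma elim_polyP n (t : 'I_n -> {poly A}) (B : comNzRingType)
    (e : {rmorphism {poly A} -> B}) (s : 'I_n -> B) (y : B) :
  (forall mu, s mu ^+ 2 = e (t mu)) -> signed_norm s y = (map_poly e (elim_poly t)).[y].
Proof.
elim: n t s y => [|n IHn] t s y sqr_s /=; first by rewrite signed_norm0 map_polyX hornerX.
have sqr_s' mu : (s \o lift ord0) mu ^+ 2 = e ((t \o lift ord0) mu) := sqr_s _.
rewrite signed_normS !(IHn _ _ _ sqr_s').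
set P := elim_poly _.
have sqr_s0 : (- s ord0) ^+ 2 = e (t ord0) by rewrite sqrrN sqr_s.
have splitP := shift_splitP y P (sqr_s ord0).
have splitN := shift_splitP y P sqr_s0.
rewrite polyseqK in splitP splitN.
rewrite -splitP -splitN /norm_step !(rmorphB, rmorphM, rmorphXn) /= map_polyC /=.
by rewrite !(hornerD, hornerN, hornerM, hornerXn, hornerC) -(sqr_s ord0); ring.
Qed.

Definition wdeg_lt (D : nat) (Q : C) := forall i j, Q`_j`_i != 0 -> (2 * i + j < D)%N.

Lemma wdeg_ltW D D' Q : (D <= D')%N -> wdeg_lt D Q -> wdeg_lt D' Q.
Proof. by move=> leDD' QD i j /QD; lia. Qed.

Lemma wdeg_lt_coef D Q j : wdeg_lt D Q -> (D <= j)%N -> Q`_j = 0.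
Proof.
by move=> QD leDj; apply/polyP=> i; rewrite coef0; apply/eqP; apply: contraTT leDj => /QD; lia.
Qed.

Lemma wdeg_lt0 D : wdeg_lt D 0.
Proof. by move=> i j; rewrite !coef0 eqxx. Qed.

Lemma wdeg_ltD D P Q : wdeg_lt D P -> wdeg_lt D Q -> wdeg_lt D (P + Q).
Proof.
move=> PD QD i j; rewrite !coefD; have [P0|/PD //] := eqVneq P`_j`_i 0.
by rewrite P0 add0r => /QD.
Qed.

Lemma wdeg_ltB D P Q : wdeg_lt D P -> wdeg_lt D Q -> wdeg_lt D (P - Q).
Proof. by move=> PD QD; apply: wdeg_ltD => // i j; rewrite !coefN oppr_eq0 => /QD. Qed.

Lemma wdeg_lt0_eq0 Q : wdeg_lt 0 Q -> Q = 0.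
Proof. by move=> Q0; apply/polyP=> j; rewrite coef0 (wdeg_lt_coef Q0). Qed.

Lemma wdeg_ltM a b N P Q :
  wdeg_lt a P -> wdeg_lt b Q -> ((0 < a)%N -> (0 < b)%N -> (a + b <= N.+1)%N) ->
  wdeg_lt N (P * Q).
Proof.
move=> Pa Qb leN i j; apply: contraNT => ge_ij; apply/eqP.
rewrite coefM coef_sum big1 // => j1 _.
rewrite coefM big1 // => i1 _.
have [->|/Pa Pj1i1] := eqVneq P`_j1`_i1 0; first by rewrite mul0r.
have [->|/Qb Qj1i1] := eqVneq Q`_(j - j1)`_(i - i1) 0; first by rewrite mulr0.
have := leN (leq_ltn_trans (leq0n _) Pj1i1) (leq_ltn_trans (leq0n _) Qj1i1).
have := ltn_ord j1; have := ltn_ord i1; lia.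
Qed.

Lemma wdeg_ltC D (c : {poly A}) : (forall i, c`_i != 0 -> (2 * i < D)%N) -> wdeg_lt D c%:P.
Proof. by move=> cD i [|j]; rewrite coefC //= ?coef0 ?eqxx // addn0 => /cD. Qed.

Lemma wdeg_ltX : wdeg_lt 2 'X.
Proof.
move=> i [|[|j]]; rewrite coefX /= ?coef0 ?eqxx //.
by rewrite coefMn coef1; case: i => [|i]; rewrite /= ?mul0rn ?eqxx.
Qed.

Lemma wdeg_lt_radicand (t : {poly A}) : (size t <= 2)%N -> wdeg_lt 3 t%:P.
Proof.
move=> st; apply: wdeg_ltC => i; apply: contraNT; rewrite -leqNgt => le_i.
by rewrite nth_default //; apply: leq_trans st _; lia.
Qed.

Lemma coefM_wdeg_top a b P Q :
  wdeg_lt a.+1 P -> wdeg_lt b.+1 Q -> (P * Q)`_(a + b) = P`_a * Q`_b.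
Proof.
move=> Pa Qb; have lt_a_ab : (a < (a + b).+1)%N by rewrite ltnS leq_addr.
rewrite coefM (bigD1 (Ordinal lt_a_ab)) //= big1 ?addr0 ?addKn // => j1 ne_j1.
have [lt_j1a|le_aj1] := ltnP j1 a; first by rewrite (wdeg_lt_coef Qb) ?mulr0 //; lia.
rewrite (wdeg_lt_coef Pa) ?mul0r //.
by move: ne_j1 le_aj1; rewrite -val_eqE /=; lia.
Qed.

Lemma shift_split_wdeg (t : {poly A}) l D : (size t <= 2)%N -> wdeg_lt D (Poly l) ->
  [/\ wdeg_lt D (shift_split t l).1, wdeg_lt D.-1 (shift_split t l).2
    & (shift_split t l).1`_D.-1 = (Poly l)`_D.-1].
Proof.
move=> st; elim: l D => [|c l IHl] D /=.
  by rewrite coef0; split=> //; apply: wdeg_lt0.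
rewrite cons_poly_def => lcD.
have lD : wdeg_lt D.-1 (Poly l).
  by move=> i j lji; have := lcD i j.+1; rewrite coefD coefMX coefC /= addr0 => /(_ lji); lia.
have cD i : c`_i != 0 -> (2 * i < D)%N.
  by move=> ci; have := lcD i 0; rewrite coefD coefMX coefC /= add0r => /(_ ci); lia.
case: D lcD lD cD => [|D] lcD lD cD; have [ED OD topE] := IHl _ lD.
  have c0 : c = 0 by apply/polyP=> i; rewrite coef0; apply/eqP; apply: contraT => /cD.
  rewrite (wdeg_lt0_eq0 ED) (wdeg_lt0_eq0 OD) c0 !(mul0r, mulr0, add0r, addr0).
  by split; [apply: wdeg_lt0|apply: wdeg_lt0|rewrite coef0 coefMX].
split.
- apply: wdeg_ltD; [apply: wdeg_ltD|exact: wdeg_ltC].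
  + by apply: wdeg_ltM ED wdeg_ltX _; lia.
  + by apply: wdeg_ltM (wdeg_lt_radicand st) OD _; lia.
- by apply: wdeg_ltD; [exact: wdeg_ltW ED|apply: wdeg_ltM OD wdeg_ltX _; lia].
- rewrite !coefD coefMX coefCM coefC (wdeg_lt_coef OD) ?mulr0 ?addr0; last by lia.
  by rewrite coefMX; case: D {lcD lD cD ED OD} topE => [|D] //= ->.
Qed.

Lemma norm_step_wdeg (t : {poly A}) P D : (size t <= 2)%N ->
  wdeg_lt D.+1 P -> P`_D = 1 ->
  wdeg_lt (D + D).+1 (norm_step t P) /\ (norm_step t P)`_(D + D) = 1.
Proof.
move=> st PD topP; rewrite -[P]polyseqK in PD topP.
have [ED OD topE] := shift_split_wdeg st PD; rewrite topP in topE.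
have O2D : wdeg_lt (D + D).-1 ((shift_split t P).2 ^+ 2).
  by rewrite expr2; apply: (wdeg_ltM OD OD); lia.
split.
  apply: wdeg_ltB; first by rewrite expr2; apply: (wdeg_ltM ED ED); lia.
  by apply: wdeg_ltM (wdeg_lt_radicand st) O2D _; lia.
rewrite coefB coefCM (wdeg_lt_coef O2D) ?mulr0 ?subr0; last by lia.
by rewrite expr2 (coefM_wdeg_top ED ED) topE mulr1.
Qed.

Lemma elim_poly_wdeg n (t : 'I_n -> {poly A}) : (forall mu, size (t mu) <= 2)%N ->
  wdeg_lt (2 ^ n).+1 (elim_poly t) /\ (elim_poly t)`_(2 ^ n) = 1.
Proof.
elim: n t => [|n IHn] t st /=; first by split; [exact: wdeg_ltX|rewrite coefX].
have [PD topP] := IHn (t \o lift ord0) (fun mu => st _).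
by rewrite expnS mul2n -addnn; apply: norm_step_wdeg.
Qed.

Lemma size_horner_opp_wdeg D (P : C) :
  wdeg_lt D.+1 P -> P`_D = 1 -> size P.[- 'X] = D.+1.
Proof.
move=> PD topP.
have size_oppXn m : size ((- 'X) ^+ m : {poly A}) = m.+1.
  by rewrite exprNn -signr_odd; case: odd; rewrite ?mulN1r ?mul1r ?size_polyN size_polyXn.
have sizeP : (size P <= D.+1)%N by apply/leq_sizeP => j; apply: wdeg_lt_coef PD.
rewrite (horner_coef_wide _ sizeP) big_ord_recr /= topP mul1r addrC size_polyDl size_oppXn //.
rewrite ltnS (leq_trans (size_sum _ _ _)) //; apply/bigmax_leqP => i _.
have sizePi : (size (P`_i)%R <= D - i)%N.
  by apply/leq_sizeP => k le_k; apply/eqP; apply: contraTT le_k => /PD; have := ltn_ord i; lia.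
apply: leq_trans (size_polyMleq _ _) _; rewrite size_oppXn.
by move: sizePi (ltn_ord i); move: (size _) => m; lia.
Qed.
End Elimination.

Lemma take_poly_in_qpoly_Xn (R : comNzRingType) n (p : {poly R}) :
  in_qpoly 'X^(n.+1) p = 0 -> take_poly n.+1 p = 0.
Proof. by move/(congr1 val); rewrite /= mk_monic_Xn Pdiv.RingMonic.take_poly_rmodp. Qed.

Lemma sqrt_mod_nilpotent (K : fieldType) (R : comNzRingType) (f : {rmorphism K -> R})
    (d : R) (a b : K) :
  2%:R != 0 :> K -> d ^+ 4 = 0 ->
  exists uv : K * K, (a != 0 -> uv.1 = 0) /\
    (f a + f uv.1 * d + f uv.2 * d ^+ 2) ^+ 2 = f (b ^+ 2) * d ^+ 2 + f (a ^+ 2).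
Proof.
move=> two_neq0 d4; have [-> | a_neq0] := eqVneq a 0.
  by exists (b, 0); split=> //; rewrite !(rmorph0, rmorphXn); ring.
pose c := b ^+ 2 / (2%:R * a); exists (0, c); split=> //=.
have two_ac : 2%:R * a * c = b ^+ 2 by rewrite mulrC divfK // mulf_neq0.
rewrite -two_ac; have -> : (f a + f 0 * d + f c * d ^+ 2) ^+ 2 =
    f (2%:R * a * c) * d ^+ 2 + f (a ^+ 2) + f (c ^+ 2) * d ^+ 4.
  by rewrite !(rmorph0, rmorphM, rmorphXn, rmorph_nat); ring.
by rewrite d4 mulr0 addr0.
Qed.

Section LowOrder.
Variable K : fieldType.
Local Notation toB := (qpolyC ('X^4 : {poly K})).
Local Notation eps := (in_qpoly ('X^4 : {poly K}) 'X).
Local Notation evalB := (in_qpoly ('X^4 : {poly K}) \o comp_poly 'X^2).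

Lemma eps_nilpotent : eps ^+ 4 = 0.
Proof.
by rewrite -rmorphXn; apply/val_inj; rewrite /= mk_monic_Xn Pdiv.RingMonic.rmodpp ?monicXn.
Qed.

Lemma evalBE p : evalB p = (map_poly toB p).[eps ^+ 2].
Proof. by rewrite /= in_qpoly_comp_horner rmorphXn. Qed.

Lemma elim_poly_low n (a b : 'I_n -> K) :
  2%:R != 0 :> K -> \sum_(mu < n) a mu = 0 -> (exists nu, a nu != 0) ->
  take_poly 2 (elim_poly (fun mu => (b mu ^+ 2)%:P * 'X + (a mu ^+ 2)%:P)).[- 'X] = 0.
Proof.
move=> two_neq0 a_sum0 [nu a_nu].
set t := fun mu => _.
have [uv uvP] := fin_all_exists
  (fun mu => sqrt_mod_nilpotent toB (a mu) (b mu) two_neq0 eps_nilpotent).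
pose s mu := toB (a mu) + toB (uv mu).1 * eps + toB (uv mu).2 * eps ^+ 2.
have sqr_s mu : s mu ^+ 2 = evalB (t mu).
  rewrite (proj2 (uvP mu)) evalBE /t rmorphD (rmorphM (map_poly toB)) /=.
  by rewrite !map_polyC map_polyX !hornerE.
have := elim_polyP (-1 * eps ^+ 2) sqr_s.
rewrite signed_norm_nilpotent ?eps_nilpotent //; first last.
- by move=> mu; rewrite fmorph_eq0 => /(proj1 (uvP mu)) ->; rewrite rmorph0.
- by exists nu; rewrite fmorph_eq0.
- by rewrite -rmorph_sum a_sum0 rmorph0.
have -> : -1 * eps ^+ 2 = evalB (- 'X) by rewrite rmorphN /= comp_polyX rmorphXn mulN1r.
rewrite horner_map /= => /esym /take_poly_in_qpoly_Xn take4.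
apply/polyP=> i; rewrite coef_take_poly coef0; case: ifP => // lt_i2.
have := congr1 (fun p : {poly K} => p`_(i * 2)) take4.
by rewrite /= coef_take_poly coef_comp_poly_Xn // dvdn_mull // mulnK // coef0 ifT //; lia.
Qed.
End LowOrder.

Definition gradicand (F : rcfType) n (w k : 'I_n -> F) (mu : 'I_n) : {poly F[i]} :=
  ((n%:R^-1 * ((k mu)%:C)%C) ^+ 2)%:P * 'X + (('i%C * (n%:R^-1 * ((w mu)%:C)%C)) ^+ 2)%:P.

Lemma gprodE (F : rcfType) n (w k : 'I_n -> F) (x : F[i]) (s : 'I_n -> F[i]) :
  (forall mu, s mu ^+ 2 = ((k mu)%:C)%C ^+ 2 * x - ((w mu)%:C)%C ^+ 2) ->
  gprod s x = (elim_poly (gradicand w k)).[- 'X].[x].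
Proof.
move=> sqr_s; transitivity (signed_norm (fun mu => n%:R^-1 * s mu) (- x)).
  apply: eq_bigr => sg _; rewrite mulr_sumr.
  by congr (_ + _); apply: eq_bigr => mu _; rewrite mulrCA.
have sqr_sn mu : (n%:R^-1 * s mu) ^+ 2 = horner_eval x (gradicand w k mu).
  by rewrite horner_evalE /gradicand !hornerE !exprMn sqr_i sqr_s; ring.
have -> : - x = horner_eval x (- 'X) by rewrite horner_evalE hornerN hornerX.
by rewrite (elim_polyP _ sqr_sn) horner_map.
Qed.

Unset Implicit Arguments.

Theorem proposition3 (F : rcfType) (n : nat) (w k : 'I_n -> F) :
  (2 <= n)%N ->
  (forall mu, 0 < k mu) ->
  \sum_(mu < n) w mu = 0 ->
  (exists mu, w mu != 0) ->
  (forall mu nu : 'I_n, (mu <= nu)%N -> `|w mu / k mu| <= `|w nu / k nu|) ->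
  exists g : {poly F[i]},
    size g = (2 ^ n).+1 /\
    (forall (x : F[i]) (s : 'I_n -> F[i]),
        (forall mu, s mu ^+ 2 = ((k mu)%:C)%C ^+ 2 * x - ((w mu)%:C)%C ^+ 2) ->
        gprod s x = g.[x]) /\
    exists h : {poly F[i]}, size h = (2 ^ n - 2).+1 /\ g = 'X ^+ 2 * h.
Proof.
move=> n_ge2 _ w_sum0 [nu w_nu] _.
pose g := (elim_poly (gradicand w k)).[- 'X].
have size_radicand mu : (size (gradicand w k mu) <= 2)%N.
  by rewrite size_MXaddC; case: ifP => // _; rewrite ltnS size_polyC_leq1.
have [PD topP] := elim_poly_wdeg size_radicand.
have size_g : size g = (2 ^ n).+1 := size_horner_opp_wdeg PD topP.
have low_g : take_poly 2 g = 0.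
  apply: elim_poly_low; first by rewrite pnatr_eq0.
    by rewrite -!mulr_sumr -rmorph_sum w_sum0 rmorph0 !mulr0.
  exists nu; rewrite !mulf_neq0 ?fmorph_eq0 ?invr_eq0 ?pnatr_eq0 -?lt0n //.
    by rewrite -sqrf_eq0 sqr_i oppr_eq0 oner_eq0.
  exact: leq_trans n_ge2.
exists g; split=> //; split=> [x s|]; first exact: gprodE.
have two_le : (2 <= 2 ^ n)%N by rewrite -[X in (X <= _)%N](expn1 2) leq_exp2l // ltnW.
exists (drop_poly 2 g); rewrite size_drop_poly size_g subSn //; split=> //.
by rewrite -{1}(poly_take_drop 2 g) low_g add0r mulrC.
Qed.
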